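(* Let $0<\varepsilon\le 1$, $\gamma>1$, and consider the auxiliary (non-stiff) system $U_t+\nabla\cdot\hat F(U)=0$ in $\mathbb R^d$, where $U=(\rho,\rho\mathbf u,\rho E)$ and $$\hat F(U)=\begin{pmatrix}\rho\mathbf u\\ \rho\mathbf u\otimes\mathbf u+p\,\mathrm{Id}\\ (\rho E+\Pi)\mathbf u\end{pmatrix},\qquad \Pi=\varepsilon^2p+(1-\varepsilon^2)p_\infty,\quad p_\infty(t)=\inf_{\mathbf x}p(\mathbf x,t),$$ with $p=(\gamma-1)\big(\rho E-\tfrac{\varepsilon^2}{2}\rho\|\mathbf u\|^2\big)$. Suppose the data $(\rho,\mathbf u,p)$ at time $t$ are well prepared, i.e. $\nabla\cdot\mathbf u(\mathbf x,t)=0$ and $\nabla p(\mathbf x,t)=0$. Then the solution of the auxiliary system at time $t+\Delta t$ satisfies $$\nabla\cdot\mathbf u(\mathbf x,t+\Delta t)=\mathcal O(\Delta t),\qquad \nabla p(\mathbf x,t+\Delta t)=\mathcal O(\Delta t^2).$$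
   Context: The auxiliary system is the non-stiff part of Klein's splitting $F=\hat F+\tilde F$ of the nondimensionalised compressible Euler flux $F(U)=(\rho\mathbf u,\rho\mathbf u\otimes\mathbf u+\frac{p}{\varepsilon^2}\mathrm{Id},(\rho E+p)\mathbf u)$, where $\varepsilon$ is the reference Mach number, $\rho$ density, $\mathbf u$ velocity, $E$ total specific energy, $p$ pressure. Solutions are assumed smooth so that Taylor expansion in time is valid. *)

From mathcomp Require Import all_boot all_order all_algebra all_classical all_reals all_analysis.
Import numFieldNormedType.Exports.
Import Order.TTheory GRing.Theory Num.Theory.
Local Open Scope ring_scope.
Local Open Scope classical_set_scope.

CoInductive smooth {R : realType} {V : normedModType R} (f : V -> R) : Prop :=
  Smooth : continuous f ->
           (forall v : V, (forall z, derivable f z v) /\ smooth (fun z => 'D_v f z)) ->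
           smooth f.

Definition smooth_st {R : realType} {d : nat} (f : 'rV[R]_d -> R -> R) : Prop :=
  smooth (fun z : ('rV[R]_d * R)%type => f z.1 z.2).

Definition ej {R : realType} {d : nat} (j : 'I_d) : 'rV[R]_d := delta_mx 0 j.

Definition dx {R : realType} {d : nat} (f : 'rV[R]_d -> R -> R) (j : 'I_d)
  (x : 'rV[R]_d) (s : R) : R := 'D_(ej j) (fun y => f y s) x.

Definition dt {R : realType} {d : nat} (f : 'rV[R]_d -> R -> R)
  (x : 'rV[R]_d) (s : R) : R := 'D_1 (fun r => f x r) s.

Definition divu {R : realType} {d : nat} (u : 'I_d -> 'rV[R]_d -> R -> R)
  (x : 'rV[R]_d) (s : R) : R := \sum_(j < d) dx (u j) j x s.

Definition unorm2 {R : realType} {d : nat} (u : 'I_d -> 'rV[R]_d -> R -> R)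
  (x : 'rV[R]_d) (s : R) : R := \sum_(j < d) (u j x s) ^+ 2.

(* total energy density rho E, from  p = (gamma-1)(rho E - eps^2/2 rho ||u||^2) *)
Definition rhoE {R : realType} {d : nat} (eps gamma : R) (rho : 'rV[R]_d -> R -> R)
  (u : 'I_d -> 'rV[R]_d -> R -> R) (p : 'rV[R]_d -> R -> R)
  (x : 'rV[R]_d) (s : R) : R :=
  p x s / (gamma - 1) + eps ^+ 2 / 2 * rho x s * unorm2 u x s.

Definition pinf {R : realType} {d : nat} (p : 'rV[R]_d -> R -> R) (s : R) : R :=
  inf [set p x s | x in [set: 'rV[R]_d]].

Definition Pi {R : realType} {d : nat} (eps : R) (p : 'rV[R]_d -> R -> R)
  (x : 'rV[R]_d) (s : R) : R :=
  eps ^+ 2 * p x s + (1 - eps ^+ 2) * pinf p s.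

Definition aux_system {R : realType} {d : nat} (eps gamma : R)
  (rho : 'rV[R]_d -> R -> R) (u : 'I_d -> 'rV[R]_d -> R -> R)
  (p : 'rV[R]_d -> R -> R) (t eta : R) : Prop :=
  forall (x : 'rV[R]_d) (s : R), `|s - t| < eta ->
  [/\
      dt rho x s + \sum_(j < d) dx (fun y r => rho y r * u j y r) j x s = 0,
      (forall i : 'I_d,
         dt (fun y r => rho y r * u i y r) x s
         + \sum_(j < d) dx (fun y r => rho y r * u i y r * u j y r) j x s
         + dx p i x s = 0) &
      dt (rhoE eps gamma rho u p) x s
      + \sum_(j < d) dx (fun y r => (rhoE eps gamma rho u p y r + Pi eps p y r) * u j y r) j x s
      = 0].

From mathcomp Require Import all_boot all_order all_algebra all_classical all_reals all_analysis.
From mathcomp Require Import lra ring.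
Import numFieldNormedType.Exports.
Import Order.TTheory GRing.Theory Num.Theory.
Local Open Scope ring_scope.
Local Open Scope classical_set_scope.

(* At time t the data satisfy div u = 0 and grad p = 0.  Then the mass equation
   reads rho_t + u.grad rho = 0, the momentum equations give
   rho (u_t + (u.grad) u) = 0, hence rho (|u|^2_t + u.grad |u|^2) = 0, and the
   energy equation collapses to p_t / (gamma - 1) = 0: the flux Pi only enters
   through grad Pi = eps^2 grad p, as p_infty depends on time alone.  So
   dt p (., t) vanishes identically and, by Schwarz's theorem,
   dt (dx_j p) (x, t) = dx_j (dt p) (x, t) = 0.  Hence s |-> dx_j p (x, s) has a
   double zero at t, which the mean value theorem turns into an O(h^2) bound,
   while s |-> div u (x, s) has a simple zero at t, which gives O(h). *)

Section RealLine.
Context {R : realType}.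
Implicit Types (g : R -> R) (t h : R).

Lemma near0P (P : R -> Prop) :
  (\forall h \near (0 : R), P h) <-> exists2 e : R, 0 < e & forall h, `|h| < e -> P h.
Proof.
have ball0E e h : ball (0 : R) e h <-> `|h| < e.
  by rewrite -ball_normE /ball_ /= sub0r normrN.
split=> [/nbhs_ballP[e e0 He]|[e e0 He]].
  by exists e => // h /ball0E; exact: He.
by apply/nbhs_ballP; exists e => // h /ball0E; exact: He.
Qed.

Lemma derivable_root_bound g t : derivable g t 1 -> g t = 0 ->
  exists2 C : R, 0 <= C & \forall h \near (0 : R), `|g (t + h)| <= C * `|h|.
Proof.
move=> /cvgr_dist_lt/(_ _ ltr01)/nbhs_ballP[e e0 near_quot] g0.
set L := lim _ in near_quot.
exists (`|L| + 1); first by rewrite addr_ge0.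
apply/near0P; exists e => // h he.
have [->|h0] := eqVneq h 0; first by rewrite addr0 g0 normr0 mulr0.
have := near_quot h; rewrite -ball_normE /ball_ /= sub0r normrN => /(_ he h0).
rewrite [h%:A]mulr1 g0 subr0 (addrC h) => quot_close.
have -> : g (t + h) = h * (h^-1 *: g (t + h)).
  by rewrite [_ *: _]/(_ * _) mulrA divff // mul1r.
rewrite normrM mulrC ler_wpM2r //.
rewrite -[X in `|X|](subKr L) (le_trans (ler_normB _ _)) // lerD2l ltW //.
Qed.

Lemma MVT_around g t h : (forall s, derivable g s 1) ->
  exists c, `|c - t| <= `|h| /\ g (t + h) - g t = 'D_1 g c * h.
Proof.
move=> g_der.
have g_is_derive (a b x : R) : x \in `]a, b[%R -> is_derive x 1 g ('D_1 g x).
  by move=> _; exact: derivableP.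
have g_cont (a b : R) :=
  @derivable_within_continuous _ _ g `[a, b]%R (fun x _ => g_der x).
have [h_ge0|h_lt0] := leP 0 h.
  have [c + E] := @MVT_segment R g _ t (t + h) (ltac:(by rewrite lerDl))
    (g_is_derive _ _) (g_cont _ _).
  rewrite in_itv /= => /andP[tc ch].
  exists c; rewrite E (addrC t h) addrK ger0_norm ?subr_ge0 // ger0_norm //; split=> //; lra.
have [c + E] := @MVT_segment R g _ (t + h) t (ltac:(by rewrite gerDl ltW))
  (g_is_derive _ _) (g_cont _ _).
rewrite in_itv /= => /andP[hc ct].
exists c; rewrite -[_ - g t]opprB E ler0_norm ?subr_le0 // ltr0_norm //; split; lra.
Qed.

Lemma derivable_double_root_bound g t : (forall s, derivable g s 1) ->
  derivable ('D_1 g) t 1 -> g t = 0 -> 'D_1 g t = 0 ->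
  exists2 C : R, 0 <= C & \forall h \near (0 : R), `|g (t + h)| <= C * h ^+ 2.
Proof.
move=> g_der g'_der g0 g'0.
have [C C0 /near0P[e e0 g'_bound]] := derivable_root_bound _ _ g'_der g'0.
exists C => //; apply/near0P; exists e => // h he.
have [c [ct]] := MVT_around _ t h g_der.
rewrite g0 subr0 => ->; rewrite normrM -(subrKC t c) -[h ^+ 2]real_normK ?num_real // mulrA.
by rewrite ler_wpM2r // (le_trans (g'_bound _ (le_lt_trans ct he))) // ler_wpM2l.
Qed.

End RealLine.

Section Smooth.
Context {R : realType} {V : normedModType R}.
Implicit Types (F : V -> R) (v w z : V).

Lemma smooth_continuous {F} : smooth F -> continuous F.
Proof. by case. Qed.

Lemma smooth_derivable {F} : smooth F -> forall z v, derivable F z v.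
Proof. by case=> _ sF z v; case: (sF v). Qed.

Lemma smooth_derive {F} v : smooth F -> smooth ('D_v F).
Proof. by case=> _ sF; case: (sF v). Qed.

Let line_quotientE F z v (a : R) :
  (fun h : R => h^-1 *: (((fun b : R => F (b *: v + z)) \o shift a) (h *: 1)
     - F (a *: v + z)))
  = (fun h => h^-1 *: ((F \o shift (a *: v + z)) (h *: v) - F (a *: v + z))).
Proof.
by apply/funext => h /=; rewrite [h *: 1]mulr1 scalerDl addrA.
Qed.

Lemma derive_line F z v (a : R) :
  'D_1 (fun b : R => F (b *: v + z)) a = 'D_v F (a *: v + z).
Proof. by rewrite /derive line_quotientE. Qed.

Lemma derivable_line F z v (a : R) :
  derivable (fun b : R => F (b *: v + z)) a 1 <-> derivable F (a *: v + z) v.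
Proof. by rewrite /derivable line_quotientE. Qed.

Definition mixed_difference F v w z (h : R) :=
  F (h *: v + (h *: w + z)) - F (h *: v + z) - F (h *: w + z) + F z.

Lemma mixed_differenceC F v w z h :
  mixed_difference F v w z h = mixed_difference F w v z h.
Proof. by rewrite /mixed_difference [h *: v + (h *: w + z)]addrCA; ring. Qed.

Lemma mixed_difference_MVT F v w z h : smooth F ->
  exists xi eta : R, [/\ `|xi| <= `|h|, `|eta| <= `|h| &
    mixed_difference F v w z h = 'D_w ('D_v F) (eta *: w + (xi *: v + z)) * h * h].
Proof.
move=> sF.
pose psi a := F (a *: v + (h *: w + z)) - F (a *: v + z).
have psi_der s : derivable psi s 1.
  by apply: derivableB; apply/(derivable_line F _ v); exact: smooth_derivable.
have [xi [xih Epsi]] := MVT_around psi 0 h psi_der.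
pose chi b := 'D_v F (b *: w + (xi *: v + z)).
have chi_der s : derivable chi s 1.
  apply/(derivable_line ('D_v F) _ w).
  exact: (smooth_derivable (smooth_derive v sF)).
have [eta [etah Echi]] := MVT_around chi 0 h chi_der.
rewrite !subr0 in xih etah; exists xi, eta; split=> //.
have -> : mixed_difference F v w z h = psi (0 + h) - psi 0.
  by rewrite /psi /mixed_difference add0r !scale0r !add0r; ring.
rewrite Epsi deriveB; try by apply/(derivable_line F _ v); exact: smooth_derivable.
rewrite (derive_line F (h *: w + z)) (derive_line F z) addrCA.
have -> : 'D_v F (h *: w + (xi *: v + z)) - 'D_v F (xi *: v + z) = chi (0 + h) - chi 0.
  by rewrite /chi add0r scale0r add0r.
by rewrite Echi /chi (derive_line ('D_v F)).
Qed.

Lemma continuous_at_eq_of_matches (A B : V -> R) z :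
  {for z, continuous A} -> {for z, continuous B} ->
  (forall r : R, 0 < r -> exists a b, [/\ ball z r a, ball z r b & A a = B b]) ->
  A z = B z.
Proof.
move=> cA cB matches; apply/eqP; rewrite -subr_eq0 -normr_le0.
apply/ler_addgt0Pr => e e0; rewrite add0r.
have e20 : 0 < e / 2 by rewrite divr_gt0.
move: cA cB => /cvgr_dist_lt/(_ _ e20)/nbhs_ballP[r1 r10 closeA].
move=> /cvgr_dist_lt/(_ _ e20)/nbhs_ballP[r2 r20 closeB].
have [a [b [za zb Eab]]] := matches (Num.min r1 r2) (ltac:(by rewrite lt_min r10 r20)).
have /closeA Aa : ball z r1 a by apply: le_ball za; rewrite ge_min lexx.
have /closeB Bb : ball z r2 b by apply: le_ball zb; rewrite ge_min lexx orbT.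
have -> : A z - B z = (A z - A a) + (B b - B z) by rewrite Eab; ring.
rewrite ltW // (le_lt_trans (ler_normD _ _)) // (distrC (B b)) [e]splitr.
exact: ltrD.
Qed.

Lemma schwarz F v w z : smooth F -> 'D_w ('D_v F) z = 'D_v ('D_w F) z.
Proof.
move=> sF.
apply: (@continuous_at_eq_of_matches ('D_w ('D_v F)) ('D_v ('D_w F))).
- exact: (smooth_continuous (smooth_derive w (smooth_derive v sF))).
- exact: (smooth_continuous (smooth_derive v (smooth_derive w sF))).
move=> r r0.
pose h := r / (`|v| + `|w| + 1).
have h0 : 0 < h by rewrite divr_gt0 // ltr_wpDl // addr_ge0.
have near_z (a b : R) (x y : V) : `|a| <= `|h| -> `|b| <= `|h| ->
    `|x| + `|y| = `|v| + `|w| -> ball z r (a *: x + (b *: y + z)).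
  move=> ah bh xy; rewrite -ball_normE /ball_ /= addrA opprD addrCA subrr addr0 normrN.
  rewrite (le_lt_trans (ler_normD _ _)) // !normrZ.
  apply: (@le_lt_trans _ _ (h * (`|v| + `|w|))).
    by rewrite -xy mulrDr -(gtr0_norm h0) lerD // ler_wpM2r.
  by rewrite /h mulrAC ltr_pdivrMr ?ltr_pM2l // ?ltrDl // ltr_wpDl // addr_ge0.
have [xi [eta [xih etah Evw]]] := mixed_difference_MVT F v w z h sF.
have [xi' [eta' [xih' etah' Ewv]]] := mixed_difference_MVT F w v z h sF.
exists (eta *: w + (xi *: v + z)), (eta' *: v + (xi' *: w + z)); split.
- by apply: near_z; rewrite // addrC.
- exact: near_z.
have hn0 : h != 0 by rewrite gt_eqF.
by move: Evw; rewrite mixed_differenceC Ewv => /(mulIf hn0)/(mulIf hn0) ->.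
Qed.

End Smooth.

Section ProductSections.
Context {R : realType} {V W : normedModType R}.
Implicit Types (K : V * W -> R) (x v : V) (s w : W).

Let fst_quotientE K x s v :
  (fun h : R => h^-1 *: (((fun y => K (y, s)) \o shift x) (h *: v) - K (x, s)))
  = (fun h => h^-1 *: ((K \o shift (x, s)) (h *: ((v, 0) : V * W)) - K (x, s))).
Proof.
apply/funext => h /=; congr (_ *: (K _ - _)).
by apply/eqP; rewrite xpair_eqE /= scaler0 add0r !eqxx.
Qed.

Let snd_quotientE K x s w :
  (fun h : R => h^-1 *: (((fun r => K (x, r)) \o shift s) (h *: w) - K (x, s)))
  = (fun h => h^-1 *: ((K \o shift (x, s)) (h *: ((0, w) : V * W)) - K (x, s))).
Proof.
apply/funext => h /=; congr (_ *: (K _ - _)).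
by apply/eqP; rewrite xpair_eqE /= scaler0 add0r !eqxx.
Qed.

Lemma derive_fst_section K x s v :
  'D_v (fun y => K (y, s)) x = 'D_((v, 0) : V * W) K (x, s).
Proof. by rewrite /derive fst_quotientE. Qed.

Lemma derivable_fst_section K x s v :
  derivable (fun y => K (y, s)) x v <-> derivable K (x, s) ((v, 0) : V * W).
Proof. by rewrite /derivable fst_quotientE. Qed.

Lemma derive_snd_section K x s w :
  'D_w (fun r => K (x, r)) s = 'D_((0, w) : V * W) K (x, s).
Proof. by rewrite /derive snd_quotientE. Qed.

Lemma derivable_snd_section K x s w :
  derivable (fun r => K (x, r)) s w <-> derivable K (x, s) ((0, w) : V * W).
Proof. by rewrite /derivable snd_quotientE. Qed.

End ProductSections.

Section SpaceTimeCalculus.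
Context {R : realType} {d : nat}.
Implicit Types (f g : 'rV[R]_d -> R -> R) (j : 'I_d) (y : 'rV[R]_d) (s : R).

Definition xderivable f := forall y s (v : 'rV[R]_d), derivable (f^~ s) y v.
Definition tderivable f := forall y s, derivable (f y) s 1.

Lemma smooth_st_xderivable {f} : smooth_st f -> xderivable f.
Proof.
move=> sf y s v; apply/(derivable_fst_section (fun z => f z.1 z.2)).
exact: (smooth_derivable sf).
Qed.

Lemma smooth_st_tderivable {f} : smooth_st f -> tderivable f.
Proof.
move=> sf y s; apply/(derivable_snd_section (fun z => f z.1 z.2)).
exact: (smooth_derivable sf).
Qed.

Lemma xderivable_cst (c : R -> R) : xderivable (fun _ r => c r).
Proof. by move=> y s v; exact: derivable_cst. Qed.

Lemma tderivable_cst (c : R) : tderivable (fun _ _ => c).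
Proof. by move=> y s; exact: derivable_cst. Qed.

Lemma xderivableD {f g} : xderivable f -> xderivable g ->
  xderivable (fun y r => f y r + g y r).
Proof. by move=> df dg y s v; exact: derivableD. Qed.

Lemma xderivableM {f g} : xderivable f -> xderivable g ->
  xderivable (fun y r => f y r * g y r).
Proof. by move=> df dg y s v; exact: derivableM. Qed.

Lemma tderivableM {f g} : tderivable f -> tderivable g ->
  tderivable (fun y r => f y r * g y r).
Proof. by move=> df dg y s; exact: derivableM. Qed.

Lemma dx_cst (c : R -> R) j y s : dx (fun _ r => c r) j y s = 0.
Proof. exact: derive_cst. Qed.

Lemma dt_cst (c : R) y s : dt (fun _ _ => c) y s = 0.
Proof. exact: derive_cst. Qed.

Lemma dxD f g j y s : xderivable f -> xderivable g ->
  dx (fun y r => f y r + g y r) j y s = dx f j y s + dx g j y s.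
Proof. by move=> df dg; exact: deriveD. Qed.

Lemma dtD f g y s : tderivable f -> tderivable g ->
  dt (fun y r => f y r + g y r) y s = dt f y s + dt g y s.
Proof. by move=> df dg; exact: deriveD. Qed.

Lemma dxM f g j y s : xderivable f -> xderivable g ->
  dx (fun y r => f y r * g y r) j y s = dx f j y s * g y s + f y s * dx g j y s.
Proof. by move=> df dg; rewrite /dx (deriveM (df y s _) (dg y s _)) addrC mulrC. Qed.

Lemma dtM f g y s : tderivable f -> tderivable g ->
  dt (fun y r => f y r * g y r) y s = dt f y s * g y s + f y s * dt g y s.
Proof. by move=> df dg; rewrite /dt (deriveM (df y s) (dg y s)) addrC mulrC. Qed.

Let sum_xsection n (F : 'I_n -> 'rV[R]_d -> R -> R) s :
  (fun y => \sum_(k < n) F k y s) = \sum_(k < n) (F k)^~ s.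
Proof. by apply/funext => y; rewrite fct_sumE. Qed.

Let sum_tsection n (F : 'I_n -> 'rV[R]_d -> R -> R) y :
  (fun r => \sum_(k < n) F k y r) = \sum_(k < n) F k y.
Proof. by apply/funext => r; rewrite fct_sumE. Qed.

Lemma xderivable_sum n (F : 'I_n -> 'rV[R]_d -> R -> R) :
  (forall k, xderivable (F k)) -> xderivable (fun y r => \sum_(k < n) F k y r).
Proof. by move=> dF y s v; rewrite sum_xsection; apply: derivable_sum => k; exact: dF. Qed.

Lemma tderivable_sum n (F : 'I_n -> 'rV[R]_d -> R -> R) :
  (forall k, tderivable (F k)) -> tderivable (fun y r => \sum_(k < n) F k y r).
Proof. by move=> dF y s; rewrite sum_tsection; apply: derivable_sum => k; exact: dF. Qed.

Lemma dx_sum n (F : 'I_n -> 'rV[R]_d -> R -> R) j y s : (forall k, xderivable (F k)) ->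
  dx (fun y r => \sum_(k < n) F k y r) j y s = \sum_(k < n) dx (F k) j y s.
Proof. by move=> dF; rewrite /dx sum_xsection derive_sum // => k; exact: dF. Qed.

Lemma dt_sum n (F : 'I_n -> 'rV[R]_d -> R -> R) y s : (forall k, tderivable (F k)) ->
  dt (fun y r => \sum_(k < n) F k y r) y s = \sum_(k < n) dt (F k) y s.
Proof. by move=> dF; rewrite /dt sum_tsection derive_sum // => k; exact: dF. Qed.

End SpaceTimeCalculus.

Section TransportAlgebra.
Context {R : idomainType} {d : nat}.
(* Values at one point; [u_x i j] is the derivative of [u i] along [x_j]. *)
Variables (rho rho_t : R) (rho_x u u_t : 'I_d -> R) (u_x : 'I_d -> 'I_d -> R).
Hypothesis div_free : \sum_(j < d) u_x j j = 0.
Hypothesis mass : rho_t + \sum_(j < d) (rho_x j * u j + rho * u_x j j) = 0.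
Hypothesis momentum : forall i, rho_t * u i + rho * u_t i
  + \sum_(j < d) ((rho_x j * u i + rho * u_x i j) * u j + rho * u i * u_x j j) = 0.

Lemma mass_transport : rho_t + \sum_(j < d) rho_x j * u j = 0.
Proof. by rewrite -[RHS]mass big_split /= -mulr_sumr div_free mulr0 addr0. Qed.

Lemma momentum_transport i : rho * (u_t i + \sum_(j < d) u_x i j * u j) = 0.
Proof.
have := momentum i.
rewrite (eq_bigr (fun j => u i * (rho_x j * u j) + rho * (u_x i j * u j)
                           + rho * u i * u_x j j)); last by move=> j _; ring.
rewrite !big_split /= -!mulr_sumr div_free mulr0 addr0 => momentum_i.
have mass_i : u i * (rho_t + \sum_(j < d) rho_x j * u j) = 0.
  by rewrite mass_transport mulr0.
by rewrite -[RHS]momentum_i -[RHS]subr0 -[X in _ - X]mass_i; ring.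
Qed.

Lemma kinetic_transport :
  rho * (\sum_(k < d) (u_t k * u k + u k * u_t k)
    + \sum_(j < d) (\sum_(k < d) (u_x k j * u k + u k * u_x k j)) * u j) = 0.
Proof.
have -> : \sum_(j < d) (\sum_(k < d) (u_x k j * u k + u k * u_x k j)) * u j
    = \sum_(k < d) 2 * u k * \sum_(j < d) u_x k j * u j.
  rewrite (eq_bigr (fun j => \sum_(k < d) 2 * u k * (u_x k j * u j))).
    by rewrite exchange_big /=; apply: eq_bigr => k _; rewrite mulr_sumr.
  by move=> j _; rewrite mulr_suml; apply: eq_bigr => k _; ring.
rewrite -big_split mulr_sumr big1 // => k _ /=.
transitivity (2 * u k * (rho * (u_t k + \sum_(j < d) u_x k j * u j))); first ring.
by rewrite momentum_transport mulr0.
Qed.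

Lemma energy_transport (c_p c_k N E p_t : R) : c_p != 0 ->
  p_t * c_p + c_k * (rho_t * N + rho * \sum_(k < d) (u_t k * u k + u k * u_t k))
  + \sum_(j < d) (c_k * (rho_x j * N + rho * \sum_(k < d) (u_x k j * u k + u k * u_x k j))
                    * u j + E * u_x j j) = 0 ->
  p_t = 0.
Proof.
move=> cp_neq0 energy; apply: (mulIf cp_neq0); rewrite mul0r -[RHS]energy.
pose N_x j := \sum_(k < d) (u_x k j * u k + u k * u_x k j).
transitivity (p_t * c_p + c_k * N * (rho_t + \sum_(j < d) rho_x j * u j)
  + c_k * (rho * (\sum_(k < d) (u_t k * u k + u k * u_t k)
                  + \sum_(j < d) N_x j * u j))
  + E * \sum_(j < d) u_x j j).
  by rewrite mass_transport kinetic_transport div_free !mulr0 !addr0.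
rewrite [X in _ = _ + X](eq_bigr (fun j => c_k * N * (rho_x j * u j)
  + c_k * rho * (N_x j * u j) + E * u_x j j)); last by move=> j _; rewrite /N_x; ring.
by rewrite !big_split /= -!mulr_sumr; ring.
Qed.

End TransportAlgebra.

Section AuxiliarySystemAtRest.
Context {R : realType} {d : nat}.
Variables (eps gamma : R) (rho : 'rV[R]_d -> R -> R) (u : 'I_d -> 'rV[R]_d -> R -> R)
  (p : 'rV[R]_d -> R -> R).
Hypotheses (rho_x : xderivable rho) (rho_t : tderivable rho)
  (u_x : forall i, xderivable (u i)) (u_t : forall i, tderivable (u i))
  (p_x : xderivable p) (p_t : tderivable p).
Implicit Types (j : 'I_d) (y : 'rV[R]_d) (s : R).

Let unorm2E : unorm2 u = fun y r => \sum_(k < d) u k y r * u k y r.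
Proof.
by apply/funext => y; apply/funext => r; apply: eq_bigr => k _; rewrite expr2.
Qed.

Lemma xderivable_unorm2 : xderivable (unorm2 u).
Proof.
rewrite unorm2E; apply: (xderivable_sum _ (fun k y r => u k y r * u k y r)) => k.
exact: (xderivableM (u_x k) (u_x k)).
Qed.

Lemma tderivable_unorm2 : tderivable (unorm2 u).
Proof.
rewrite unorm2E; apply: (tderivable_sum _ (fun k y r => u k y r * u k y r)) => k.
exact: (tderivableM (u_t k) (u_t k)).
Qed.

Lemma dx_unorm2 j y s : dx (unorm2 u) j y s
  = \sum_(k < d) (dx (u k) j y s * u k y s + u k y s * dx (u k) j y s).
Proof.
rewrite unorm2E dx_sum => [|k]; last exact: (xderivableM (u_x k) (u_x k)).
by apply: eq_bigr => k _; exact: (dxM _ _ _ _ _ (u_x k) (u_x k)).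
Qed.

Lemma dt_unorm2 y s : dt (unorm2 u) y s
  = \sum_(k < d) (dt (u k) y s * u k y s + u k y s * dt (u k) y s).
Proof.
rewrite unorm2E dt_sum => [|k]; last exact: (tderivableM (u_t k) (u_t k)).
by apply: eq_bigr => k _; rewrite (dtM _ _ _ _ (u_t k) (u_t k)).
Qed.

Let p_scaled_x : xderivable (fun y r => p y r * (gamma - 1)^-1).
Proof. exact: (xderivableM p_x (xderivable_cst _)). Qed.

Let p_scaled_t : tderivable (fun y r => p y r * (gamma - 1)^-1).
Proof. exact: (tderivableM p_t (tderivable_cst _)). Qed.

Let rho_scaled_x : xderivable (fun y r => eps ^+ 2 / 2 * rho y r).
Proof. exact: (xderivableM (xderivable_cst _) rho_x). Qed.

Let rho_scaled_t : tderivable (fun y r => eps ^+ 2 / 2 * rho y r).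
Proof. exact: (tderivableM (tderivable_cst _) rho_t). Qed.

Lemma xderivable_rhoE : xderivable (rhoE eps gamma rho u p).
Proof. exact: (xderivableD p_scaled_x (xderivableM rho_scaled_x xderivable_unorm2)). Qed.

Lemma dx_rhoE j y s : dx (rhoE eps gamma rho u p) j y s
  = dx p j y s * (gamma - 1)^-1
    + eps ^+ 2 / 2 * (dx rho j y s * unorm2 u y s + rho y s * dx (unorm2 u) j y s).
Proof.
rewrite (dxD _ _ _ _ _ p_scaled_x (xderivableM rho_scaled_x xderivable_unorm2)).
rewrite (dxM _ _ _ _ _ p_x (xderivable_cst _)) dx_cst.
rewrite (dxM _ _ _ _ _ rho_scaled_x xderivable_unorm2).
rewrite (dxM _ _ _ _ _ (xderivable_cst _) rho_x) dx_cst; ring.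
Qed.

Lemma dt_rhoE y s : dt (rhoE eps gamma rho u p) y s
  = dt p y s * (gamma - 1)^-1
    + eps ^+ 2 / 2 * (dt rho y s * unorm2 u y s + rho y s * dt (unorm2 u) y s).
Proof.
rewrite (dtD _ _ _ _ p_scaled_t (tderivableM rho_scaled_t tderivable_unorm2)).
rewrite (dtM _ _ _ _ p_t (tderivable_cst _)) dt_cst.
rewrite (dtM _ _ _ _ rho_scaled_t tderivable_unorm2).
rewrite (dtM _ _ _ _ (tderivable_cst _) rho_t) dt_cst; ring.
Qed.

Let p_inf_x : xderivable (fun (_ : 'rV[R]_d) r => (1 - eps ^+ 2) * pinf p r).
Proof. exact: xderivable_cst. Qed.

Lemma xderivable_Pi : xderivable (Pi eps p).
Proof. exact: (xderivableD (xderivableM (xderivable_cst _) p_x) p_inf_x). Qed.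

Lemma dx_Pi j y s : dx (Pi eps p) j y s = eps ^+ 2 * dx p j y s.
Proof.
rewrite (dxD _ _ _ _ _ (xderivableM (xderivable_cst _) p_x) p_inf_x) dx_cst.
by rewrite (dxM _ _ _ _ _ (xderivable_cst _) p_x) dx_cst mul0r add0r addr0.
Qed.

Lemma dt_pressure_eq0 t eta y : 1 < gamma -> 0 < eta ->
  aux_system eps gamma rho u p t eta ->
  divu u y t = 0 -> (forall j, dx p j y t = 0) -> dt p y t = 0.
Proof.
move=> gamma_gt1 eta_gt0 aux div_free grad_p0.
have [mass momentum energy] := aux y t (ltac:(by rewrite subrr normr0)).
apply: (@energy_transport _ _ (rho y t) (dt rho y t) (fun j => dx rho j y t)
  (fun j => u j y t) (fun j => dt (u j) y t) (fun k j => dx (u k) j y t) div_free _ _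
  (gamma - 1)^-1 (eps ^+ 2 / 2) (unorm2 u y t) (rhoE eps gamma rho u p y t + Pi eps p y t)).
- by move: mass; under eq_bigr => j _ do rewrite (dxM _ _ _ _ _ rho_x (u_x j)).
- move=> i; have := momentum i; rewrite grad_p0 addr0 (dtM _ _ _ _ rho_t (u_t i)).
  by under eq_bigr => j _ do rewrite (dxM _ _ _ _ _ (xderivableM rho_x (u_x i)) (u_x j))
    (dxM _ _ _ _ _ rho_x (u_x i)).
- by rewrite invr_neq0 // subr_eq0 gt_eqF.
have dx_flux j :
    dx (fun y r => (rhoE eps gamma rho u p y r + Pi eps p y r) * u j y r) j y t
    = (dx (rhoE eps gamma rho u p) j y t + dx (Pi eps p) j y t) * u j y t
      + (rhoE eps gamma rho u p y t + Pi eps p y t) * dx (u j) j y t.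
  rewrite -(dxD _ _ _ _ _ xderivable_rhoE xderivable_Pi).
  exact: (dxM _ _ _ _ _ (xderivableD xderivable_rhoE xderivable_Pi) (u_x j)).
move: energy; rewrite dt_rhoE dt_unorm2 (eq_bigr _ (fun j _ => dx_flux j)) => energy.
apply: etrans energy; congr (_ + _); apply: eq_bigr => j _.
by rewrite dx_rhoE dx_unorm2 dx_Pi grad_p0; ring.
Qed.

End AuxiliarySystemAtRest.

Section SmoothSpaceTime.
Context {R : realType} {d : nat}.
Implicit Types (f : 'rV[R]_d -> R -> R) (j : 'I_d) (y : 'rV[R]_d) (s : R).

Let dx_jointE f j :
  (fun z : 'rV[R]_d * R => dx f j z.1 z.2)
  = 'D_((ej j, 0) : 'rV[R]_d * R) (fun z => f z.1 z.2).
Proof.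
by apply/funext => -[y s]; exact: (derive_fst_section (fun z => f z.1 z.2)).
Qed.

Let dt_jointE f :
  (fun z : 'rV[R]_d * R => dt f z.1 z.2)
  = 'D_((0, 1) : 'rV[R]_d * R) (fun z => f z.1 z.2).
Proof.
by apply/funext => -[y s]; exact: (derive_snd_section (fun z => f z.1 z.2)).
Qed.

Lemma smooth_st_dx f j : smooth_st f -> smooth_st (dx f j).
Proof. by move=> sf; rewrite /smooth_st dx_jointE; exact: smooth_derive. Qed.

Lemma smooth_st_dt f : smooth_st f -> smooth_st (dt f).
Proof. by move=> sf; rewrite /smooth_st dt_jointE; exact: smooth_derive. Qed.

Lemma dt_dx f j y s : smooth_st f -> dt (dx f j) y s = dx (dt f) j y s.
Proof.
move=> sf.
transitivity ('D_((0, 1) : 'rV[R]_d * R) (fun z => dx f j z.1 z.2) (y, s)).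
  exact: (derive_snd_section (fun z => dx f j z.1 z.2)).
transitivity ('D_((ej j, 0) : 'rV[R]_d * R) (fun z => dt f z.1 z.2) (y, s)).
  by rewrite dx_jointE dt_jointE schwarz.
by symmetry; exact: (derive_fst_section (fun z => dt f z.1 z.2)).
Qed.

End SmoothSpaceTime.

Section WellPreparedBounds.
Context {R : realType} {d : nat}.

Lemma near_bound_forall n (g : 'I_n -> R -> R) (phi : R -> R) :
  (forall h, 0 <= phi h) ->
  (forall j, exists2 C : R, 0 <= C & \forall h \near (0 : R), `|g j h| <= C * phi h) ->
  exists2 C : R, 0 <= C & \forall h \near (0 : R), forall j, `|g j h| <= C * phi h.
Proof.
move=> phi_ge0 /(fin_all_exists2 (P := fun _ C => 0 <= C)) [C C_ge0 near_C].
have sum_ge0 : 0 <= \sum_(j < n) C j by apply: sumr_ge0 => j _.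
exists (\sum_(j < n) C j) => //.
apply: (@filter_forall R _ (fun j h => `|g j h| <= (\sum_(i < n) C i) * phi h)
  (nbhs (0 : R)) _) => j.
apply: filterS (near_C j) => h /le_trans; apply.
by rewrite ler_wpM2r // (bigD1 j) //= lerDl sumr_ge0.
Qed.

Lemma divu_lin_bound (u : 'I_d -> 'rV[R]_d -> R -> R) x t :
  (forall i, smooth_st (u i)) -> divu u x t = 0 ->
  exists2 C : R, 0 <= C & \forall h \near (0 : R), `|divu u x (t + h)| <= C * `|h|.
Proof.
move=> s_u div0; apply: derivable_root_bound div0.
apply: (tderivable_sum _ (fun j => dx (u j) j)) => j.
exact: smooth_st_tderivable (smooth_st_dx _ _ (s_u j)).
Qed.

Lemma dx_quad_bound (p : 'rV[R]_d -> R -> R) j x t :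
  smooth_st p -> (forall y, dt p y t = 0) -> dx p j x t = 0 ->
  exists2 C : R, 0 <= C & \forall h \near (0 : R), `|dx p j x (t + h)| <= C * h ^+ 2.
Proof.
move=> s_p dt_p0 dx_p0.
have s_dxp := smooth_st_dx _ j s_p.
apply: derivable_double_root_bound dx_p0 _.
- exact: (smooth_st_tderivable s_dxp x).
- exact: (smooth_st_tderivable (smooth_st_dt _ s_dxp) x t).
rewrite -/(dt (dx p j) x t) dt_dx // /dx (_ : (fun y => dt p y t) = cst 0).
  exact: derive_cst.
by apply/funext => y; exact: dt_p0.
Qed.

End WellPreparedBounds.

Theorem proposition2p1 (R : realType) (d : nat) (eps gamma : R)
  (rho : 'rV[R]_d -> R -> R) (u : 'I_d -> 'rV[R]_d -> R -> R)
  (p : 'rV[R]_d -> R -> R) (t eta : R) :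
  0 < eps <= 1 -> 1 < gamma -> 0 < eta ->
  smooth_st rho -> (forall i, smooth_st (u i)) -> smooth_st p ->
  (* p_infty(s) = inf_x p(x,s) is finite *)
  (forall s, `|s - t| < eta -> has_lbound [set p x s | x in [set: 'rV[R]_d]]) ->
  aux_system eps gamma rho u p t eta ->
  (* well-prepared data at time t *)
  (forall x, divu u x t = 0) ->
  (forall x (j : 'I_d), dx p j x t = 0) ->
  forall x : 'rV[R]_d,
  exists C delta : R, 0 < delta /\
    forall h : R, `|h| < delta ->
      `|divu u x (t + h)| <= C * `|h| /\
      (forall j : 'I_d, `|dx p j x (t + h)| <= C * h ^+ 2).
Proof.
move=> _ gamma_gt1 eta_gt0 s_rho s_u s_p _ aux div0 grad_p0 x.
have dt_p0 y : dt p y t = 0.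
  exact: (dt_pressure_eq0 _ _ _ _ _ (smooth_st_xderivable s_rho)
    (smooth_st_tderivable s_rho) (fun i => smooth_st_xderivable (s_u i))
    (fun i => smooth_st_tderivable (s_u i)) (smooth_st_xderivable s_p)
    (smooth_st_tderivable s_p) _ _ _ gamma_gt1 eta_gt0 aux (div0 y) (grad_p0 y)).
have [C1 C1_ge0 div_near] := divu_lin_bound u x t s_u (div0 x).
have [C2 C2_ge0 grad_near] := near_bound_forall _ _ _ (fun h => sqr_ge0 h)
  (fun j => dx_quad_bound p j x t s_p dt_p0 (grad_p0 x j)).
have [delta delta_gt0 bounds] : exists2 delta : R, 0 < delta & forall h, `|h| < delta ->
    `|divu u x (t + h)| <= C1 * `|h| /\ forall j, `|dx p j x (t + h)| <= C2 * h ^+ 2.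
  by apply/near0P; exact: filterI.
exists (C1 + C2), delta; split=> // h /bounds[div_h grad_h]; split.
  by rewrite (le_trans div_h) // ler_wpM2r // lerDl.
by move=> j; rewrite (le_trans (grad_h j)) // ler_wpM2r ?sqr_ge0 // lerDr.
Qed.
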